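(* Let $(X_B,X_C,X_R)$ be an OCC of a graph $G$, let $f_X$ be a proper $2$-coloring of $G[X_B]$, let $B^\ast \subseteq X_B$ satisfy property $(\star)$, and let $G'$ be the reduced graph. Let $Y \subseteq V(G) \cap V(G')$ be arbitrary. Then there is a closed walk of odd length $F$ in $G$ with $V(F) \cap V(G) \cap V(G') = Y$ if and only if there is a closed walk of odd length $F'$ in $G'$ with $V(F') \cap V(G) \cap V(G') = Y$.
   Context: An odd cycle cut (OCC) of $G$ is a partition $(X_B, X_C, X_R)$ of $V(G)$ such that $G[X_B]$ is bipartite, there is no edge between $X_B$ and $X_R$, and $X_B \cup X_C \neq \emptyset$. Auxiliary graph: $G_{\mathrm{aux}}$ is obtained from a copy of $G[X_B]$ by adding, for each $v \in X_C$, new vertices $v^{(0)}, v^{(1)}$ and, for each $u \in N_G(v) \cap X_B$, the edge $v^{(f_X(u))}u$; $T := \{v^{(i)} : v \in X_C, i \in \{0,1\}\}$. Property $(\star)$ of $B^\ast \subseteq X_B$: for every partition $(T_1,T_2,T_3,T_X)$ of $T$ into four possibly empty parts, if there exists $S \subseteq X_B$ with $|S| \le |T|$ separating $T_i$ and $T_j$ (no connected component of $G_{\mathrm{aux}} - T_X - S$ meets both) for all $1 \le i < j \le 3$, then $B^\ast$ contains such a set $S$ of minimum possible size. Reduced graph $G'$: start from $G - (X_B \setminus B^\ast)$; then, for every unordered pair $\{u,v\}$ of (not necessarily distinct) vertices of $X_C \cup B^\ast$ and every parity $p \in \{\text{even},\text{odd}\}$ such that $G$ contains a $(u,v)$-walk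 of length of parity $p$ that has at least one internal vertex and all of whose internal vertices lie in $X_B \setminus B^\ast$: if $p$ is even, add two new vertices $x, x'$, each adjacent to exactly $u$ and $v$; if $p$ is odd, add four new vertices $x,y,x',y'$ and the edges $ux, xy, yv, ux', x'y', y'v$. All added vertices are distinct and new. Thus $V(G) \cap V(G') = V(G) \setminus (X_B \setminus B^\ast)$. *)

From mathcomp Require Import all_boot.
Set Implicit Arguments. Unset Strict Implicit. Unset Printing Implicit Defensive.

Section OCCDefs.
Variable V : finType.

Definition simple_graph (G : rel V) : Prop := symmetric G /\ irreflexive G.

Definition proper_2col (G : rel V) (XB : {set V}) (f : V -> bool) : Prop :=
  forall u v, u \in XB -> v \in XB -> G u v -> f u != f v.

Definition is_OCC (G : rel V) (XB XC XR : {set V}) : Prop :=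
  [disjoint XB & XC] /\ [disjoint XB & XR] /\ [disjoint XC & XR] /\
  XB :|: XC :|: XR = setT /\
  (exists f, proper_2col G XB f) /\
  (forall u v, u \in XB -> v \in XR -> ~~ G u v) /\
  XB :|: XC != set0.

(* inl u : copy of u in X_B ; inr (v, i) : the vertex v^(i) for v in X_C *)
Definition aux_vertex := (V + (V * bool))%type.

Definition aux_present (XB XC : {set V}) (a : aux_vertex) : bool :=
  match a with inl u => u \in XB | inr (v, _) => v \in XC end.

Definition aux_edge (G : rel V) (XB XC : {set V}) (f : V -> bool)
    (a b : aux_vertex) : bool :=
  match a, b with
  | inl u, inl w => [&& u \in XB, w \in XB & G u w]
  | inr (v, i), inl u => [&& v \in XC, u \in XB, G v u & i == f u]
  | inl u, inr (v, i) => [&& v \in XC, u \in XB, G v u & i == f u]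
  | _, _ => false
  end.

Definition auxT (XC : {set V}) : {set aux_vertex} :=
  [set a | match a with inr (v, _) => v \in XC | inl _ => false end].

Definition aux_alive (XB XC : {set V}) (TX : {set aux_vertex}) (S : {set V})
    (a : aux_vertex) : bool :=
  [&& aux_present XB XC a, a \notin TX &
      match a with inl u => u \notin S | inr _ => true end].

Definition aux_rel (G : rel V) (XB XC : {set V}) (f : V -> bool) (TX : {set aux_vertex}) (S : {set V}) : rel aux_vertex :=
  fun a b => [&& aux_edge G XB XC f a b, aux_alive XB XC TX S a
                & aux_alive XB XC TX S b].

Definition separates (G : rel V) (XB XC : {set V}) (f : V -> bool) (TX : {set aux_vertex}) (S : {set V})
    (Ti Tj : {set aux_vertex}) : bool :=
  [forall a in Ti, forall b in Tj, ~~ connect (aux_rel G XB XC f TX S) a b].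

Definition separates3 (G : rel V) (XB XC : {set V}) (f : V -> bool) (T1 T2 T3 TX : {set aux_vertex}) S : bool :=
  [&& separates G XB XC f TX S T1 T2, separates G XB XC f TX S T1 T3
    & separates G XB XC f TX S T2 T3].

Definition partition4 (T T1 T2 T3 TX : {set aux_vertex}) : Prop :=
  [disjoint T1 & T2] /\ [disjoint T1 & T3] /\ [disjoint T1 & TX] /\
  [disjoint T2 & T3] /\ [disjoint T2 & TX] /\ [disjoint T3 & TX] /\
  T1 :|: T2 :|: T3 :|: TX = T.

Definition star_property (G : rel V) (XB XC : {set V}) (f : V -> bool) (Bs : {set V}) : Prop :=
  forall T1 T2 T3 TX : {set aux_vertex},
    partition4 (auxT XC) T1 T2 T3 TX ->
    (exists S : {set V}, S \subset XB /\ #|S| <= #|auxT XC| /\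
        separates3 G XB XC f T1 T2 T3 TX S) ->
    exists S : {set V}, S \subset Bs /\ separates3 G XB XC f T1 T2 T3 TX S /\
      (forall S' : {set V}, S' \subset XB -> #|S'| <= #|auxT XC| ->
          separates3 G XB XC f T1 T2 T3 TX S' -> #|S| <= #|S'|).

(* A (u,v)-walk in G of parity p (true = odd) with at least one internal
   vertex, all internal vertices in A: u :: s ++ [v] with s nonempty. *)
Definition special_walk (G : rel V) (A : {set V}) (u v : V) (p : bool) : Prop :=
  exists s : seq V, [/\ s != [::], path G u (rcons s v),
                        all (fun x => x \in A) s & odd (size s).+1 = p].

(* gadget vertex (u, v, p, i): the i-th new vertex added for the unordered pair
   {u,v} (represented with enum_rank u <= enum_rank v) and parity p.
   p = false (even): i = 0 is x, i = 1 is x'.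
   p = true  (odd) : i = 0 is x, 1 is y, 2 is x', 3 is y'. *)
Definition gadget := (V * V * bool * 'I_4)%type.
Definition red_vertex := (V + gadget)%type.

Definition gadget_present (G : rel V) (XB XC Bs : {set V}) (g : gadget) : Prop :=
  match g with (u, v, p, i) =>
    [/\ u \in XC :|: Bs, v \in XC :|: Bs, (enum_rank u <= enum_rank v)%N
      & p || (i < 2)%N] /\ special_walk G (XB :\: Bs) u v p
  end.

Definition gadget_adjV (g : gadget) (a : V) : bool :=
  match g with (u, v, p, i) =>
    if p then ((i == 0 :> nat) || (i == 2 :> nat)) && (a == u)
              || ((i == 1 :> nat) || (i == 3 :> nat)) && (a == v)
    else (a == u) || (a == v)
  end.

Definition gadget_adjG (g h : gadget) : bool :=
  match g, h with (u, v, p, i), (u', v', p', j) =>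
    [&& u == u', v == v', p == p', p &
       [|| (i == 0 :> nat) && (j == 1 :> nat), (i == 1 :> nat) && (j == 0 :> nat),
           (i == 2 :> nat) && (j == 3 :> nat) | (i == 3 :> nat) && (j == 2 :> nat)]]
  end.

Definition red_edge (G : rel V) (XB XC Bs : {set V}) (a b : red_vertex) : Prop :=
  match a, b with
  | inl x, inl y => x \notin XB :\: Bs /\ y \notin XB :\: Bs /\ G x y
  | inl x, inr g => gadget_present G XB XC Bs g /\ gadget_adjV g x
  | inr g, inl x => gadget_present G XB XC Bs g /\ gadget_adjV g x
  | inr g, inr h => gadget_present G XB XC Bs g /\ gadget_present G XB XC Bs h
                    /\ gadget_adjG g h
  end.

End OCCDefs.

Fixpoint walk_path {T : Type} (e : T -> T -> Prop) (x : T) (s : seq T) : Prop :=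
  match s with
  | [::] => True
  | y :: s' => e x y /\ walk_path e y s'
  end.

Definition odd_closed_walk {T : Type} (e : T -> T -> Prop) (x : T) (s : seq T) : Prop :=
  walk_path e x s /\ last x s = x /\ odd (size s).

From mathcomp Require Import all_boot.
From Stdlib Require Import ClassicalEpsilon.
Set Implicit Arguments. Unset Strict Implicit. Unset Printing Implicit Defensive.

(* Write A := X_B \ B*, and call a walk whose interior lies in A a detour.
   The gadgets of G' record, for each pair of vertices of X_C ∪ B* and each
   parity, whether a detour of that parity joins them; the endpoints of a
   detour leaving A lie in X_C ∪ B* because no edge joins X_B to X_R.
   An odd closed walk of G cannot stay inside A, which is bipartite; cutting it
   at its vertices outside A and replacing each detour by a gadget path of the
   same parity gives an odd closed walk of G'. Conversely, sending every new
   vertex to a vertex of a fixed detour for its pair turns each edge of G' into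
   an odd detour of G. Both translations keep the vertices outside A. *)

Section Walks.
Variables (T : Type) (e : T -> T -> Prop).

Lemma walk_path_cat x s1 s2 :
  walk_path e x (s1 ++ s2) <-> walk_path e x s1 /\ walk_path e (last x s1) s2.
Proof. by elim: s1 x => [|y s1 IH] x /=; [tauto | rewrite IH; tauto]. Qed.

Lemma walk_path_rcons x s y :
  walk_path e x (rcons s y) <-> walk_path e x s /\ e (last x s) y.
Proof. by rewrite -cats1 walk_path_cat /=; tauto. Qed.

Lemma walk_path_rev_rcons : (forall a b, e a b -> e b a) ->
  forall x s y, walk_path e x (rcons s y) -> walk_path e y (rcons (rev s) x).
Proof.
move=> esym x s; elim: s x => [|z s IH] x y /=; first by case=> /esym.
case=> exz /IH W; rewrite rev_cons; apply/walk_path_rcons.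
by rewrite last_rcons; split; last exact: esym.
Qed.

End Walks.

Lemma walk_pathE (T : Type) (r : rel T) x s :
  walk_path (fun a b => r a b) x s <-> path r x s.
Proof.
elim: s x => [|y s IH] x //=.
by rewrite IH; split => [[-> ->] | /andP[]].
Qed.

Lemma path_rcons_rev (T : Type) (r : rel T) : symmetric r ->
  forall x s y, path r x (rcons s y) -> path r y (rcons (rev s) x).
Proof.
move=> rsym x s y /walk_pathE W; apply/walk_pathE.
by apply: walk_path_rev_rcons W => a b; rewrite rsym.
Qed.

Section ProperColouring.
Variables (V : finType) (G : rel V) (X : {set V}) (f : V -> bool).
Hypothesis fX : proper_2col G X f.

Lemma proper_2col_path_parity x s : x \in X -> all (fun y => y \in X) s ->
  path G x s -> f (last x s) = f x (+) odd (size s).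
Proof.
elim: s x => [|y s IH] x xX /=; first by rewrite addbF.
case/andP=> yX sX /andP[Gxy P]; rewrite (IH y yX sX P).
by move: (fX xX yX Gxy); case: (f x); case: (f y); case: (odd _).
Qed.

Lemma proper_2col_closed_path_even x s : x \in X -> all (fun y => y \in X) s ->
  path G x s -> last x s = x -> ~~ odd (size s).
Proof.
move=> xX sX P L; move: (proper_2col_path_parity xX sX P).
by rewrite L; case: (f x); case: (odd _).
Qed.

End ProperColouring.

Section Reduction.
Variables (V : finType) (G : rel V) (XB XC XR Bs : {set V}).
Hypothesis sG : symmetric G.

Local Notation A := (XB :\: Bs).
Local Notation inside_A := (all (fun x => x \in A)).
Local Notation R := (red_edge G XB XC Bs).

Lemma red_edge_sym a b : R a b -> R b a.
Proof.
case: a b => [x|g] [y|h] //=; first by case=> xA [yA]; rewrite sG.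
case=> pg [ph]; case: g h pg ph => [[[u v] p] i] [[[u' v'] p'] j] pg ph.
rewrite /gadget_adjG => /and5P[/eqP eu /eqP ev /eqP ep pt adj].
subst u' v' p'; do 2 (split => //).
by rewrite !eqxx pt; case/or4P: adj => /andP[/eqP-> /eqP->].
Qed.

Lemma special_walk_sym u v p : special_walk G A u v p -> special_walk G A v u p.
Proof.
case=> s [s0 P As Ps]; exists (rev s); split.
- by rewrite -size_eq0 size_rev size_eq0.
- exact: path_rcons_rev.
- by rewrite all_rev.
- by rewrite size_rev.
Qed.

Lemma gadget_walk u v p : u \in XC :|: Bs -> v \in XC :|: Bs ->
  (enum_rank u <= enum_rank v)%N -> special_walk G A u v p ->
  exists t, [/\ walk_path R (inl u) (rcons t (inl v)), forall y, inl y \notin t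
              & odd (size t) = ~~ p].
Proof.
move=> uC vC uv sw.
have pr (i : 'I_4) : p || (i < 2)%N -> gadget_present G XB XC Bs (u, v, p, i) by [].
case: p sw pr => sw pr.
- exists [:: inr (u, v, true, ord0); inr (u, v, true, @Ordinal 4 1 isT)].
  by split=> [|y|] //=; rewrite !eqxx; do !split => //; apply: pr.
- exists [:: inr (u, v, false, ord0)].
  by split=> [|y|] //=; rewrite !eqxx orbT; do !split => //; apply: pr.
Qed.

Hypothesis occ : is_OCC G XB XC XR.

Lemma boundary_in_XC_Bs a h : a \notin A -> h \in A -> G h a -> a \in XC :|: Bs.
Proof.
case: occ => _ [_ [_ [cov [_ [noXR _]]]]] aA hA Gha.
have /setUP[/setUP[aB|aC]|aR] : a \in XB :|: XC :|: XR by rewrite cov.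
- by move: aA; rewrite !inE aB andbT negbK => ->; rewrite orbT.
- by rewrite inE aC.
- by move: (noXR h a (subsetP (subsetDl XB Bs) h hA) aR); rewrite Gha.
Qed.

Lemma detour_reduced_walk a b s : a \notin A -> b \notin A -> inside_A s ->
  path G a (rcons s b) ->
  exists t, [/\ walk_path R (inl a) (rcons t (inl b)), forall y, inl y \notin t
              & odd (size t) = odd (size s)].
Proof.
case: s => [|h s] aA bA sA; first by case/andP=> Gab _; exists [::].
move=> P; have hA : h \in A by case/andP: sA.
have lA : last h s \in A by apply: (allP sA); exact: mem_last.
have aC : a \in XC :|: Bs.
  by apply: (boundary_in_XC_Bs aA hA); rewrite sG; case/andP: P.
have bC : b \in XC :|: Bs.
  by apply: (boundary_in_XC_Bs bA lA); move: P; rewrite rcons_path => /andP[].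
have sw : special_walk G A a b (~~ odd (size (h :: s))) by exists (h :: s).
case: (leqP (enum_rank a) (enum_rank b)) => [ab|/ltnW ba].
  by have [t [W N O]] := gadget_walk aC bC ab sw; exists t; rewrite O negbK.
have [t [W N O]] := gadget_walk bC aC ba (special_walk_sym sw).
exists (rev t); rewrite size_rev O negbK; split => //.
- by apply: walk_path_rev_rcons W; exact: red_edge_sym.
- by move=> y; rewrite mem_rev.
Qed.

(* [pre] is the stretch inside [A] read since the last vertex outside [A]. *)
Lemma reduced_walk_of_walk w a pre : a \notin A -> inside_A pre ->
  path G a (pre ++ w) -> last a (pre ++ w) \notin A ->
  exists t, [/\ walk_path R (inl a) t, last (inl a) t = inl (last a (pre ++ w)),
    odd (size t) = odd (size (pre ++ w))
    & forall y, y \notin A -> (inl y \in inl a :: t) = (y \in a :: pre ++ w)].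
Proof.
elim: w a pre => [|b w IH] a pre aA preA.
  rewrite cats0; case: pre preA => [|h pre] preA _.
    by exists [::]; split => // y _; rewrite !inE.
  by case/negP; apply: (allP preA); exact: mem_last h pre.
case bA: (b \in A).
  by rewrite -cat_rcons; apply: IH; rewrite // all_rcons bA.
rewrite -cat_rcons cat_path last_cat last_rcons => /andP[P1 P2] L.
have [t1 [W1 N1 O1]] := detour_reduced_walk aA (negbT bA) preA P1.
have [t2 [W2 L2 O2 M2]] := IH b [::] (negbT bA) isT P2 L.
exists (rcons t1 (inl b) ++ t2); split.
- by apply/walk_path_cat; rewrite last_rcons.
- by rewrite last_cat last_rcons L2.
- by rewrite !size_cat !size_rcons /= !oddD O1 O2.
move=> y yA; have ypre : y \notin pre by apply: contra yA => /(allP preA).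
move: (M2 y yA); rewrite /= !(in_cons, mem_cat, mem_rcons) (negbTE (N1 y)).
rewrite (negbTE ypre) /= !orbF => ->.
by congr orb; apply/eqP/eqP => [[]|->].
Qed.

Lemma odd_closed_walk_reduce f x s : proper_2col G XB f ->
  odd_closed_walk (fun a b => G a b) x s ->
  exists x' t, odd_closed_walk R x' t /\
    [set y | (y \notin A) && (inl y \in x' :: t)] = [set y | y \in x :: s] :&: ~: A.
Proof.
move=> fXB [/walk_pathE P [L O]].
have xs : x \in s by case: s P L O => [|h s] //= _ <- _; exact: mem_last.
have [sA|/allPn[z zs zA]] := boolP (inside_A s).
  have sXB : all (fun y => y \in XB) s by apply: sub_all sA => y /setDP[].
  by move: (proper_2col_closed_path_even fXB (allP sXB x xs) sXB P L); rewrite O.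
have [i r Er] := rot_to zs.
have /= Pz : cycle G (z :: r) by rewrite -Er rot_cycle (cycle_path x) L.
have Lz : last z (rcons r z) \notin A by rewrite last_rcons.
have [t [W Lt Ot Mt]] := @reduced_walk_of_walk (rcons r z) z [::] zA isT Pz Lz.
have sizer : size (rcons r z) = size s by rewrite size_rcons -(size_rot i s) Er.
exists (inl z), t; split; first by rewrite /odd_closed_walk Lt Ot /= last_rcons sizer.
apply/setP => y; rewrite !in_set -in_setD andbC.
have [yA|yA] := boolP (y \in A); rewrite ?andbF ?andbT // Mt //=.
have -> : (y \in x :: s) = (y \in s) by rewrite in_cons; case: eqP => // ->.
by rewrite -[y \in s](mem_rot i) Er !in_cons mem_rcons in_cons orbA orbb.
Qed.

Definition odd_detour (x y : V) : Prop :=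
  exists w, [/\ path G x (rcons w y), inside_A w & odd (size w).+1].

Lemma odd_detour_sym x y : odd_detour x y -> odd_detour y x.
Proof.
case=> w [P wA Ow]; exists (rev w).
by rewrite all_rev size_rev (path_rcons_rev sG).
Qed.

Lemma odd_detour_nth x0 u v s k : path G u (rcons s v) -> inside_A s ->
  (k < size s)%N -> ~~ odd k -> odd_detour u (nth x0 s k).
Proof.
move=> P sA ks ok; exists (take k s); split.
- by rewrite -take_nth //; move: (take_path k.+1 P); rewrite -cats1 takel_cat.
- by apply/allP => y /mem_take /(allP sA).
- by rewrite size_takel // ltnW.
Qed.

Lemma odd_detour_nth_rev x0 u v s k : path G u (rcons s v) -> inside_A s ->
  (k < size s)%N -> odd (size s - k) -> odd_detour v (nth x0 s k).
Proof.
move=> P sA ks ok; have kS : (size s - k.+1).+1 = size s - k by rewrite subnSK.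
have jS : (size s - k.+1 < size s)%N by rewrite kS leq_subr.
rewrite -[k](subKn (ltnW ks)) -kS -nth_rev //.
apply: (@odd_detour_nth x0 v u (rev s)); rewrite ?all_rev ?size_rev //.
- exact: path_rcons_rev.
- by move: ok; rewrite -kS /=; case: odd.
Qed.

Definition gadget_detour (u v : V) (p : bool) : seq V :=
  epsilon (inhabits [::])
    (fun s => [/\ s != [::], path G u (rcons s v), inside_A s & odd (size s).+1 = p]).

Lemma gadget_detourP u v p : special_walk G A u v p ->
  [/\ gadget_detour u v p != [::], path G u (rcons (gadget_detour u v p) v),
      inside_A (gadget_detour u v p) & odd (size (gadget_detour u v p)).+1 = p].
Proof. exact: epsilon_spec. Qed.

(* Each new vertex is sent into the detour chosen for its pair: x and x' to its
   first vertex, y and y' to its second one. *)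
Definition red_rep (r : red_vertex V) : V :=
  match r with
  | inl x => x
  | inr (u, v, p, i) => nth u (gadget_detour u v p) (p && odd i)
  end.

Definition red_present (r : red_vertex V) : Prop :=
  if r is inr g then gadget_present G XB XC Bs g else True.

Lemma red_edge_present a b : R a b -> red_present a /\ red_present b.
Proof. by case: a b => [x|g] [y|h] /=; case=> // ? [? _]. Qed.

Lemma gadget_detour_size u v p : special_walk G A u v p ->
  (p < size (gadget_detour u v p))%N.
Proof.
move=> sw; have [+ _ _ +] := gadget_detourP sw.
case: (gadget_detour u v p) => [|h [|h2 s]] //= _; first by move=> <-.
by case: (p) => /=.
Qed.

Lemma red_rep_gadget_in_A g : gadget_present G XB XC Bs g -> red_rep (inr g) \in A.
Proof.
case: g => [[[u v] p] i] [_ sw] /=; have [_ _ sA _] := gadget_detourP sw.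
apply: (allP sA); apply: mem_nth; apply: leq_ltn_trans (gadget_detour_size sw).
by case: (p); case: (odd i).
Qed.

Lemma red_rep_outside_A r y : red_present r -> y \notin A ->
  (red_rep r == y) = (r == inl y).
Proof.
case: r => [x|g] /= pr yA; first by apply/eqP/eqP => [->|[]].
by apply/eqP => rg; move: yA; rewrite -rg (red_rep_gadget_in_A pr).
Qed.

Lemma gadget_adjV_odd (u v x : V) (i : 'I_4) :
  gadget_adjV (u, v, true, i) x = if odd i then x == v else x == u.
Proof. by case: i => [[|[|[|[|m]]]] Hi] /=; rewrite ?orbF. Qed.

Lemma red_rep_link_endpoint g x : gadget_present G XB XC Bs g -> gadget_adjV g x ->
  odd_detour x (red_rep (inr g)).
Proof.
case: g => [[[u v] p] i] [_ sw]; rewrite /red_rep.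
have [_ P sA Ps] := gadget_detourP sw; have ps := gadget_detour_size sw.
move: (gadget_detour u v p) P sA Ps ps => s P sA Ps ps.
case: (p) Ps ps => Ps ps; rewrite /= in Ps.
  rewrite gadget_adjV_odd /=; case: (odd i) => /eqP ->.
  - by apply: (odd_detour_nth_rev _ P sA ps); rewrite oddB ?(ltnW ps) //= addbT Ps.
  - by apply: (odd_detour_nth _ P sA) => //; apply: ltn_trans ps.
have s0 : (0 < size s)%N by [].
case/orP => /eqP ->; first exact: (odd_detour_nth _ P sA).
by apply: (odd_detour_nth_rev _ P sA s0); rewrite subn0 -[odd _]negbK Ps.
Qed.

Lemma gadget_adjGP (g h : gadget V) : gadget_adjG g h ->
  exists u v (i j : 'I_4),
    [/\ g = (u, v, true, i), h = (u, v, true, j) & odd i != odd j].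
Proof.
case: g h => [[[u v] p] i] [[[u' v'] p'] j].
rewrite /gadget_adjG => /and5P[/eqP <- /eqP <- /eqP <- pt adj]; exists u, v, i, j.
by rewrite pt; split => //; case/or4P: adj => /andP[/eqP-> /eqP->].
Qed.

Lemma red_rep_link_inner g h : gadget_present G XB XC Bs g -> gadget_adjG g h ->
  odd_detour (red_rep (inr g)) (red_rep (inr h)).
Proof.
move=> pg /gadget_adjGP[u [v [i [j [eg eh ij]]]]]; subst g h.
case: pg => _ sw; rewrite /red_rep /=.
have [_ P _ _] := gadget_detourP sw.
move: (gadget_detour u v true) P (gadget_detour_size sw).
case=> [|h1 [|h2 s]] //= /and3P[_ G12 _] _.
have G21 : G h2 h1 by rewrite sG.
by case: (odd i) (odd j) ij => [] [] // _; exists [::]; rewrite /= ?G12 ?G21.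
Qed.

Lemma red_rep_link a b : R a b -> odd_detour (red_rep a) (red_rep b).
Proof.
case: a b => [x|g] [y|h] /=.
- by case=> _ [_ Gxy]; exists [::]; rewrite /= Gxy.
- by case; exact: red_rep_link_endpoint.
- by case=> pg adj; apply: odd_detour_sym; exact: red_rep_link_endpoint.
- by case=> pg [_ adj]; exact: red_rep_link_inner.
Qed.

Lemma walk_of_reduced_walk s a : walk_path R a s -> red_present a ->
  exists t, [/\ path G (red_rep a) t, last (red_rep a) t = red_rep (last a s),
    odd (size t) = odd (size s)
    & forall y, y \notin A -> (y \in red_rep a :: t) = (inl y \in a :: s)].
Proof.
elim: s a => [|b s IH] a /=.
  by move=> _ pa; exists [::]; split => // y yA; rewrite !inE eq_sym red_rep_outside_A.
case=> ab W pa; have [_ pb] := red_edge_present ab.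
have [w [Pw wA Ow]] := red_rep_link ab.
have [t [Pt Lt Ot Mt]] := IH b W pb.
exists (rcons w (red_rep b) ++ t); split.
- by rewrite cat_path last_rcons Pw Pt.
- by rewrite last_cat last_rcons Lt.
- by move: Ow; rewrite size_cat size_rcons /= oddD Ot; case: odd.
move=> y yA; have yw : y \notin w by apply: contra yA => /(allP wA).
rewrite in_cons mem_cat mem_rcons in_cons (negbTE yw) orbF -in_cons Mt //.
by rewrite [RHS]in_cons eq_sym red_rep_outside_A // eq_sym.
Qed.

Lemma odd_closed_walk_expand x s : odd_closed_walk R x s ->
  exists x' t, odd_closed_walk (fun a b => G a b) x' t /\
    [set y | y \in x' :: t] :&: ~: A = [set y | (y \notin A) && (inl y \in x :: s)].
Proof.
case=> W [L O].
have px : red_present x.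
  by case: s W L O => [|b s] //= [xb _] _ _; case: (red_edge_present xb).
have [t [Pt Lt Ot Mt]] := walk_of_reduced_walk W px.
exists (red_rep x), t; split; first by rewrite /odd_closed_walk walk_pathE Lt L Ot.
apply/setP => y; rewrite !in_set -in_setD andbC.
by have [yA|yA] := boolP (y \in A); rewrite ?andbF ?andbT // Mt.
Qed.

End Reduction.

Theorem mainTheorem17 (V : finType) (G : rel V) (XB XC XR Bs : {set V})
    (f : V -> bool) (Y : {set V}) :
  simple_graph G ->
  is_OCC G XB XC XR ->
  proper_2col G XB f ->
  Bs \subset XB ->
  star_property G XB XC f Bs ->
  Y \subset ~: (XB :\: Bs) ->
  (exists (x : V) (s : seq V),
      odd_closed_walk (fun a b => G a b) x s /\
      [set y | y \in x :: s] :&: ~: (XB :\: Bs) = Y) <->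
  (exists (x : red_vertex V) (s : seq (red_vertex V)),
      odd_closed_walk (red_edge G XB XC Bs) x s /\
      [set y | (y \notin XB :\: Bs) && (inl y \in x :: s)] = Y).
Proof.
case=> sG _ occ fXB _ _ _; split.
- case=> x [s [C <-]].
  have [x' [t [C' E]]] := odd_closed_walk_reduce Bs sG occ fXB C.
  by exists x', t.
- case=> x [s [C <-]].
  have [x' [t [C' E]]] := odd_closed_walk_expand sG C.
  by exists x', t.
Qed.
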